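(* Let $t>1$ be an integer and let $A$ be a connected $Gt$-NEDB graph with constant $\acute{\gamma}_A$ and diameter $d$. Then $d-1\le t\,\acute{\gamma}_A$.
   Context: All graphs are finite, simple, undirected. $d_A(u,v)$ is the shortest-path distance in $A$; for a vertex $v$ and an edge $f'=\alpha'\beta'$, $d_A(v,f')=\min\{d_A(v,\alpha'),d_A(v,\beta')\}$. For an edge $f=\alpha\beta$, $m^A_\alpha(f)$ is the number of edges $f'\in E(A)$ with $d_A(\alpha,f')<d_A(\beta,f')$, and $m^A_\beta(f)$ is defined symmetrically. For an integer $t>1$, a connected graph $A$ is generalized $t$-nicely edge distance-balanced ($Gt$-NEDB) if there is a positive integer $\acute{\gamma}_A$ such that every edge $f$ has its endpoints labelled $\alpha,\beta$ with $m^A_\alpha(f)=t\,m^A_\beta(f)$ and $m^A_\beta(f)=\acute{\gamma}_A$. *)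

(* A finite simple graph is a symmetric irreflexive
   relation e on a finType T. *)
From mathcomp Require Import all_boot.
Set Implicit Arguments. Unset Strict Implicit. Unset Printing Implicit Defensive.

Section Graph.
Variables (T : finType) (e : rel T).

Definition walk_len (u v : T) (n : nat) : bool :=
  [exists p : n.-tuple T, path e u p && (last u p == v)].

(* shortest-path distance: least n with a walk of length n
   (every shortest walk has length < #|T|; returns #|T| if unreachable,
   which never happens in a connected graph) *)
Definition gdist (u v : T) : nat :=
  find (walk_len u v) (iota 0 #|T|).

Definition connected_graph : Prop := forall u v : T, connect e u v.

Definition edges : {set {set T}} :=
  [set E : {set T} | [exists x, exists y, e x y && (E == [set x; y])]].

Definition dist_edge (v : T) (E : {set T}) : nat :=
  \big[minn/#|T|]_(x in E) gdist v x.

Definition m_end (a b : T) : nat :=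
  #|[set F in edges | dist_edge a F < dist_edge b F]|.

Definition diameter : nat := \max_(u : T) \max_(v : T) gdist u v.

Definition GtNEDB (t gamma : nat) : Prop :=
  [/\ 1 < t, connected_graph, 0 < gamma &
   forall x y : T, e x y ->
     (m_end x y = t * m_end y x /\ m_end y x = gamma) \/
     (m_end y x = t * m_end x y /\ m_end x y = gamma)].

End Graph.

(* Take a diametral pair u, v and a shortest path u = x0, x1, ..., xD = v.
   Each of the D - 1 edges x(i+1) x(i+2) lies at distance at most i from x1
   but at distance exactly i + 1 from x0, so m_{x1}(x0 x1) >= D - 1.  Both
   end-counts of any edge of a Gt-NEDB graph are gamma or t * gamma, hence at
   most t * gamma. *)
From mathcomp Require Import all_boot.
From mathcomp Require Import zify.
Set Implicit Arguments. Unset Strict Implicit. Unset Printing Implicit Defensive.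

Section Distance.
Variables (T : finType) (e : rel T).

Lemma walk_lenP a b n :
  reflect (exists p : seq T, [/\ size p = n, path e a p & last a p = b])
          (walk_len e a b n).
Proof.
apply: (iffP existsP).
  by case=> p /andP[hp /eqP hl]; exists (val p); rewrite size_tuple.
case=> p [hs hp hl]; have hs' : size p == n by rewrite hs.
by exists (Tuple hs'); rewrite /= hp hl eqxx.
Qed.

Lemma walk_len0 a : walk_len e a a 0.
Proof. by apply/walk_lenP; exists [::]. Qed.

Lemma walk_len_cat a b c m n :
  walk_len e a b m -> walk_len e b c n -> walk_len e a c (m + n).
Proof.
move=> /walk_lenP[p [sp pp lp]] /walk_lenP[q [sq pq lq]].
apply/walk_lenP; exists (p ++ q); split.
- by rewrite size_cat sp sq.
- by rewrite cat_path pp lp pq.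
- by rewrite last_cat lp.
Qed.

Lemma walk_len_rcons a b c n : walk_len e a b n -> e b c -> walk_len e a c n.+1.
Proof.
move=> wab ebc; rewrite -addn1; apply: walk_len_cat wab _.
by apply/walk_lenP; exists [:: c]; rewrite /= ebc.
Qed.

(* A shortest walk repeats no vertex, so it has fewer than #|T| steps. *)
Lemma connect_walk_len a b :
  connect e a b -> exists2 n, n < #|T| & walk_len e a b n.
Proof.
case/connectP=> p pp ->; case: (shortenP pp) => p' pp' up' _.
exists (size p'); last by apply/walk_lenP; exists p'.
by have := max_card (mem (a :: p')); rewrite (card_uniqP up').
Qed.

Lemma gdist_lt_card a b : connect e a b -> gdist e a b < #|T|.
Proof.
case/connect_walk_len=> n ltn wn.
rewrite /gdist -{2}(size_iota 0 #|T|) -has_find.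
by apply/hasP; exists n; rewrite ?mem_iota.
Qed.

Lemma walk_len_gdist a b : gdist e a b < #|T| -> walk_len e a b (gdist e a b).
Proof.
move=> lt; have hh : has (walk_len e a b) (iota 0 #|T|).
  by rewrite has_find size_iota.
by have := nth_find 0 hh; rewrite nth_iota.
Qed.

Lemma gdist_le_card a b : gdist e a b <= #|T|.
Proof. by rewrite /gdist -{2}(size_iota 0 #|T|) find_size. Qed.

Lemma gdist_le a b n : walk_len e a b n -> gdist e a b <= n.
Proof.
move=> w; case: (ltnP n #|T|) => [ltn | gen]; last first.
  exact: leq_trans (gdist_le_card a b) gen.
rewrite leqNgt; apply/negP => lt.
by have := before_find 0 lt; rewrite nth_iota // add0n w.
Qed.

Lemma dist_edge_le a (E : {set T}) x : x \in E -> dist_edge e a E <= gdist e a x.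
Proof.
rewrite /dist_edge => xE; elim: (index_enum T) (mem_index_enum x) => //= z r IH.
rewrite inE big_cons => /predU1P[<- | /IH le_r]; first by rewrite xE geq_minl.
by case: ifP => // _; rewrite geq_min le_r orbT.
Qed.

Lemma leq_dist_edge a (E : {set T}) i :
  (forall x, x \in E -> i <= gdist e a x) -> i <= #|T| -> i <= dist_edge e a E.
Proof.
move=> le_i le_card; apply: (big_ind (fun m => i <= m)) => // m1 m2 h1 h2.
by rewrite leq_min h1 h2.
Qed.

End Distance.

Section Geodesic.
Variables (T : finType) (e : rel T) (u : T) (p : seq T).
Hypotheses (p_path : path e u p) (p_shortest : gdist e u (last u p) = size p).

Local Notation x k := (nth u (u :: p) k).

Lemma geodesic_edge k : k < size p -> e (x k) (x k.+1).
Proof. exact: (pathP u p_path). Qed.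

Lemma geodesic_walk_len i j : i <= j <= size p -> walk_len e (x i) (x j) (j - i).
Proof.
elim: j => [|j IH] /andP[le_ij le_jp].
  by move: le_ij; rewrite leqn0 => /eqP ->; exact: walk_len0.
case: (ltngtP i j.+1) le_ij => [lt_ij | // | ->] _; last by rewrite subnn walk_len0.
rewrite subSn //; apply: walk_len_rcons (geodesic_edge le_jp).
by apply: IH; apply/andP; split; last exact: ltnW.
Qed.

(* A shorter walk to x k would extend along p to a walk to the end of p
   shorter than p itself. *)
Lemma gdist_geodesic k : k <= size p -> gdist e u (x k) = k.
Proof.
move=> le_kp; have w0k : walk_len e u (x k) k.
  by have := @geodesic_walk_len 0 k; rewrite le_kp subn0; apply.
apply/eqP; rewrite eqn_leq gdist_le //= leqNgt; apply/negP => lt_k.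
have lt_card : gdist e u (x k) < #|T|.
  by rewrite (leq_trans lt_k) // (leq_trans le_kp) // -p_shortest gdist_le_card.
have x_end : x (size p) = last u p by rewrite -[RHS]/(last u (u :: p)) -nth_last.
have := walk_len_cat (walk_len_gdist lt_card) (@geodesic_walk_len k (size p) _).
rewrite le_kp leqnn x_end => /(_ isT) /gdist_le.
by rewrite p_shortest; lia.
Qed.

Lemma dist_edge_geodesic_from_start i :
  i.+2 <= size p -> dist_edge e u [set x i.+1; x i.+2] = i.+1.
Proof.
move=> le_ip; apply/eqP; rewrite eqn_leq; apply/andP; split.
  by apply: leq_trans (dist_edge_le _ _ (setU11 _ _)) _; rewrite gdist_geodesic // ltnW.
apply: leq_dist_edge; last first.
  by rewrite -(gdist_geodesic (ltnW le_ip)) gdist_le_card.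
by move=> y; rewrite !inE => /orP[] /eqP ->; rewrite gdist_geodesic ?(ltnW le_ip).
Qed.

Lemma dist_edge_geodesic_from_second i :
  i.+2 <= size p -> dist_edge e (x 1) [set x i.+1; x i.+2] <= i.
Proof.
move=> le_ip; apply: leq_trans (dist_edge_le _ _ (setU11 _ _)) _.
have := @geodesic_walk_len 1 i.+1; rewrite subn1 ltnS leq0n (ltnW le_ip).
by move=> /(_ isT) /gdist_le.
Qed.

Lemma geodesic_m_end : (size p).-1 <= m_end e (x 1) u.
Proof.
pose f (i : 'I_(size p).-1) := [set x i.+1; x i.+2].
have le_ip (i : 'I_(size p).-1) : i.+2 <= size p.
  by have := ltn_ord i; lia.
have f_inj : injective f.
  move=> i j /(congr1 (dist_edge e u)).
  by rewrite !dist_edge_geodesic_from_start // => -[/val_inj].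
rewrite -(card_ord (size p).-1) -(card_imset _ f_inj); apply: subset_leq_card.
apply/subsetP => _ /imsetP[i _ ->]; rewrite !inE; apply/andP; split.
  apply/existsP; exists (x i.+1); apply/existsP; exists (x i.+2).
  by rewrite geodesic_edge ?eqxx.
apply: leq_ltn_trans (dist_edge_geodesic_from_second (le_ip i)) _.
by rewrite [dist_edge e (x 0) _]dist_edge_geodesic_from_start.
Qed.

End Geodesic.

Lemma GtNEDB_m_end_le (T : finType) (e : rel T) (t gamma : nat) x y :
  GtNEDB e t gamma -> e x y -> m_end e y x <= t * gamma.
Proof.
case=> lt1t _ _ balanced /balanced [[_ ->] | [-> ->]] //.
by rewrite leq_pmull // ltnW.
Qed.

Theorem lemma4p2 (T : finType) (e : rel T) (e_sym : symmetric e)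
  (e_irr : irreflexive e) (t gamma : nat) :
  1 < t -> connected_graph e -> GtNEDB e t gamma ->
  diameter e - 1 <= t * gamma.
Proof.
move=> _ conn nedb.
suff le_dist u v : gdist e u v <= (t * gamma).+1.
  rewrite leq_subLR add1n.
  by apply/bigmax_leqP => u _; apply/bigmax_leqP => v _; exact: le_dist.
have /walk_lenP[p [size_p p_path last_p]] :=
  walk_len_gdist (gdist_lt_card (conn u v)).
rewrite -size_p; case: p size_p p_path last_p => // y p size_p p_path last_p.
have shortest : gdist e u (last u (y :: p)) = size (y :: p) by rewrite last_p.
have := geodesic_m_end p_path shortest.
have := GtNEDB_m_end_le nedb (geodesic_edge p_path (ltn0Sn _)).
by move=> /= le_m le_size; apply: leq_trans le_size le_m.
Qed.
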